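(* Let $k:(0,\infty)\to(0,\infty)$ be $C^1$, $K(X):=k(|X|)|X|^{-1}X$ for $X\in\mathbb{R}^N\setminus\{0\}$, $b(t):=k'(t)t/k(t)$, and let $X:\Omega\to\mathbb{R}^N\setminus\{0\}$ be $C^1$ on an open $\Omega\subset\mathbb{R}^n$. Let $A$ be a real $N\times N$ matrix and $0<\lambda\le\Lambda$ such that $\langle A\chi,\chi\rangle\ge\lambda|\chi|^2$ and $|A\chi|\le\Lambda|\chi|$ for all $\chi\in\mathbb{R}^{N\times n}$. Put $\kappa=\lambda/\Lambda^2$, $\nu=\lambda/\Lambda$. At every point where $b:=b(|X|)>0$, $$\langle\kappa A\,DX,D(K(X))\rangle\ge\big(\alpha^{1/2}-(1-\nu^2)^{1/2}\big)|DX||D(K(X))|,\qquad\alpha=1-\Big(\frac{b-1}{b+1}\Big)^2 .$$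
   Context: $DX$ denotes the $N\times n$ Jacobian matrix of $X$; for $\chi\in\mathbb{R}^{N\times n}$, $A\chi$ is the matrix product; for $N\times n$ matrices $P,Q$, $\langle P,Q\rangle=\sum_{a,j}P_{aj}Q_{aj}$ and $|P|=\langle P,P\rangle^{1/2}$. *)

From mathcomp Require Import ssreflect ssrfun ssrbool eqtype ssrnat seq fintype.
From Stdlib Require Import Reals.
Set Implicit Arguments.
Unset Strict Implicit.

Open Scope R_scope.

Definition vec (n : nat) := 'I_n -> R.
Definition mat (N n : nat) := 'I_N -> 'I_n -> R.

Definition fsum (n : nat) (f : 'I_n -> R) : R := foldr Rplus 0 (map f (enum 'I_n)).

Definition vzero (n : nat) : vec n := fun _ => 0.
Definition vsub (n : nat) (x y : vec n) : vec n := fun i => x i - y i.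
Definition vnorm (n : nat) (v : vec n) : R := sqrt (fsum (fun i => v i * v i)).

Definition frob (N n : nat) (P Q : mat N n) : R :=
  fsum (fun a => fsum (fun j => P a j * Q a j)).
Definition mnorm (N n : nat) (P : mat N n) : R := sqrt (frob P P).

Definition mulA (N n : nat) (A : mat N N) (P : mat N n) : mat N n :=
  fun a j => fsum (fun c => A a c * P c j).
Definition mscale (N n : nat) (s : R) (P : mat N n) : mat N n :=
  fun a j => s * P a j.

Definition Kmap (N : nat) (k : R -> R) (p : vec N) : vec N :=
  fun a => k (vnorm p) * / vnorm p * p a.

Definition bfun (k k' : R -> R) (t : R) : R := k' t * t / k t.

Definition shift (n : nat) (x : vec n) (j : 'I_n) (t : R) : vec n :=
  fun i => x i + (if i == j then t else 0).

Definition has_partial (n : nat) (f : vec n -> R) (x : vec n) (j : 'I_n) (l : R) : Prop :=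
  derivable_pt_lim (fun t => f (shift x j t)) 0 l.

Definition is_jacobian (N n : nat) (F : vec n -> vec N) (x : vec n) (J : mat N n) : Prop :=
  forall (a : 'I_N) (j : 'I_n), has_partial (fun y => F y a) x j (J a j).

Definition cont_at (n : nat) (f : vec n -> R) (x : vec n) : Prop :=
  forall eps, 0 < eps -> exists delta, 0 < delta /\
    forall y, vnorm (vsub y x) < delta -> Rabs (f y - f x) < eps.

Definition is_open (n : nat) (O : vec n -> Prop) : Prop :=
  forall x, O x -> exists r, 0 < r /\ forall y, vnorm (vsub y x) < r -> O y.

Definition C1_on (N n : nat) (O : vec n -> Prop) (F : vec n -> vec N) : Prop :=
  exists DF : vec n -> mat N n,
    forall x, O x -> is_jacobian F x (DF x) /\
      forall (a : 'I_N) (j : 'I_n), cont_at (fun y => DF y a j) x.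

From mathcomp Require Import ssreflect ssrfun ssrbool eqtype ssrnat seq fintype.
From Stdlib Require Import Reals Lra Psatz FunctionalExtensionality.
Open Scope R_scope.

(* With r = |X| and p = X, the chain rule gives D(K(X)) = (k(r)/r) S, where
   S = DX + (b - 1) P_p DX stretches by the factor b the projection P_p DX of
   the columns of DX on the line spanned by p.  If x = |P_p DX|^2 and
   y = |DX|^2 - x, then <DX, S> = y + b x and |S|^2 = y + b^2 x, and
   (y + b x)^2 - alpha (x + y) (y + b^2 x) = ((b - 1) (b x - y) / (b + 1))^2,
   so <DX, S> >= alpha^(1/2) |DX| |S|.  Ellipticity gives
   |kappa A DX - DX| <= (1 - nu^2)^(1/2) |DX|, and Cauchy-Schwarz turns this
   perturbation of DX into the loss of (1 - nu^2)^(1/2). *)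

Section FiniteSums.
Context {n : nat}.
Implicit Types f g : 'I_n -> R.

Lemma fsum_ext f g : (forall i, f i = g i) -> fsum f = fsum g.
Proof. by move=> fg; rewrite /fsum; elim: (enum 'I_n) => //= i s ->; rewrite fg. Qed.

Lemma fsum0 : fsum (fun _ : 'I_n => 0) = 0.
Proof. by rewrite /fsum; elim: (enum 'I_n) => //= i s ->; ring. Qed.

Lemma fsumD f g : fsum (fun i => f i + g i) = fsum f + fsum g.
Proof. by rewrite /fsum; elim: (enum 'I_n) => /= [|i s ->]; ring. Qed.

Lemma fsumZ c f : fsum (fun i => c * f i) = c * fsum f.
Proof. by rewrite /fsum; elim: (enum 'I_n) => /= [|i s ->]; ring. Qed.

Lemma fsum_ge0 f : (forall i, 0 <= f i) -> 0 <= fsum f.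
Proof.
move=> f_ge0; rewrite /fsum; elim: (enum 'I_n) => /= [|i s IH]; first lra.
by have := f_ge0 i; lra.
Qed.

Lemma fsum_derive (F : 'I_n -> R -> R) (F' : 'I_n -> R) t0 :
  (forall i, derivable_pt_lim (F i) t0 (F' i)) ->
  derivable_pt_lim (fun t => fsum (fun i => F i t)) t0 (fsum F').
Proof.
move=> dF; rewrite /fsum; elim: (enum 'I_n) => /= [|i s IH].
- exact: derivable_pt_lim_const.
- exact: (derivable_pt_lim_plus _ _ _ _ _ (dF i) IH).
Qed.

End FiniteSums.

Lemma fsum_swap {N n : nat} (F : 'I_N -> 'I_n -> R) :
  fsum (fun a => fsum (fun j => F a j)) = fsum (fun j => fsum (fun a => F a j)).
Proof.
rewrite /fsum; elim: (enum 'I_N) => /= [|a s ->]; first exact: (esym fsum0).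
exact: (esym (fsumD _ _)).
Qed.

Lemma vnorm_sqr {n : nat} (p : vec n) : vnorm p ^ 2 = fsum (fun i => p i * p i).
Proof. by rewrite pow2_sqrt //; apply: fsum_ge0 => i; nra. Qed.

Definition madd {N n : nat} (P Q : mat N n) : mat N n := fun a j => P a j + Q a j.
Definition msub {N n : nat} (P Q : mat N n) : mat N n := fun a j => P a j - Q a j.

Section Frobenius.
Context {N n : nat}.
Implicit Types P Q S : mat N n.

Lemma frob_ext {P P' Q Q'} :
  (forall a j, P a j = P' a j) -> (forall a j, Q a j = Q' a j) -> frob P Q = frob P' Q'.
Proof.
by move=> PP' QQ'; apply: fsum_ext => a; apply: fsum_ext => j; rewrite PP' QQ'.
Qed.

Lemma frobC P Q : frob P Q = frob Q P.
Proof. by apply: fsum_ext => a; apply: fsum_ext => j; ring. Qed.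

Lemma frobDl P S Q : frob (madd P S) Q = frob P Q + frob S Q.
Proof.
rewrite /frob -fsumD; apply: fsum_ext => a.
by rewrite -fsumD; apply: fsum_ext => j; rewrite /madd; ring.
Qed.

Lemma frobDr P Q S : frob P (madd Q S) = frob P Q + frob P S.
Proof. by rewrite frobC frobDl !(frobC _ P). Qed.

Lemma frobZl c P Q : frob (mscale c P) Q = c * frob P Q.
Proof.
rewrite /frob -fsumZ; apply: fsum_ext => a.
by rewrite -fsumZ; apply: fsum_ext => j; rewrite /mscale; ring.
Qed.

Lemma frobZr c P Q : frob P (mscale c Q) = c * frob P Q.
Proof. by rewrite frobC frobZl frobC. Qed.

Lemma frobBl P S Q : frob (msub P S) Q = frob P Q - frob S Q.
Proof.
have -> : frob (msub P S) Q = frob (madd P (mscale (-1) S)) Q.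
  by apply: frob_ext => // a j; rewrite /msub /madd /mscale; ring.
by rewrite frobDl frobZl; ring.
Qed.

Lemma frobBr P Q S : frob P (msub Q S) = frob P Q - frob P S.
Proof. by rewrite frobC frobBl !(frobC _ P). Qed.

Lemma frob_self_ge0 P : 0 <= frob P P.
Proof. by apply: fsum_ge0 => a; apply: fsum_ge0 => j; nra. Qed.

Lemma mnorm_ge0 P : 0 <= mnorm P.
Proof. exact: sqrt_pos. Qed.

Lemma mnorm_sqr P : mnorm P ^ 2 = frob P P.
Proof. exact/pow2_sqrt/frob_self_ge0. Qed.

Lemma mnormZ c P : 0 <= c -> mnorm (mscale c P) = c * mnorm P.
Proof.
move=> c_ge0; rewrite /mnorm frobZl frobZr -Rmult_assoc sqrt_mult_alt; last nra.
by rewrite sqrt_square.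
Qed.

End Frobenius.

Lemma quadratic_ge0_discr (a b c : R) :
  0 <= a -> (forall t, 0 <= a * t ^ 2 + 2 * b * t + c) -> b ^ 2 <= a * c.
Proof.
move=> a_ge0; case: (Rle_lt_or_eq_dec 0 a a_ge0) => [a_gt0 | <-] q_ge0.
- have := q_ge0 (- b / a).
  have -> : a * (- b / a) ^ 2 + 2 * b * (- b / a) + c = (a * c - b ^ 2) / a
    by field; lra.
  move=> /(Rmult_le_compat_r a _ _ (Rlt_le _ _ a_gt0)).
  by rewrite Rmult_0_l /Rdiv Rmult_assoc Rinv_l; lra.
- case: (Req_dec b 0) => [-> | b_neq0]; first lra.
  have := q_ge0 (- (c + 1) / (2 * b)).
  have -> : 0 * (- (c + 1) / (2 * b)) ^ 2 + 2 * b * (- (c + 1) / (2 * b)) + c = -1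
    by field.
  lra.
Qed.

Lemma frob_cauchy_schwarz {N n : nat} (P Q : mat N n) :
  Rabs (frob P Q) <= mnorm P * mnorm Q.
Proof.
have discr : frob P Q ^ 2 <= frob P P * frob Q Q.
  apply: quadratic_ge0_discr => [|t]; first exact: frob_self_ge0.
  have := frob_self_ge0 (madd (mscale t P) Q).
  rewrite frobDl !frobDr !frobZl !frobZr (frobC Q P); lra.
rewrite -sqrt_Rsqr_abs /mnorm -sqrt_mult_alt; last exact: frob_self_ge0.
by apply: sqrt_le_1_alt; rewrite /Rsqr; nra.
Qed.

Definition vmulmx {N n : nat} (p : vec N) (P : mat N n) : vec n :=
  fun j => fsum (fun c => p c * P c j).
Definition outer {N n : nat} (p : vec N) (m : vec n) : mat N n := fun a j => p a * m j.

Definition radial_proj {N n : nat} (p : vec N) (P : mat N n) : mat N n :=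
  mscale (/ vnorm p ^ 2) (outer p (vmulmx p P)).
Definition radial_stretch {N n : nat} (b : R) (p : vec N) (P : mat N n) : mat N n :=
  madd P (mscale (b - 1) (radial_proj p P)).

Section RadialStretch.
Context {N n : nat}.
Variables (p : vec N) (P : mat N n).
Hypothesis p_gt0 : 0 < vnorm p.

Let m := vmulmx p P.

Lemma frob_outer_vmulmx : frob P (outer p m) = fsum (fun j => m j * m j).
Proof.
rewrite /frob fsum_swap; apply: fsum_ext => j.
rewrite /m /vmulmx -fsumZ; apply: fsum_ext => a; rewrite /outer; ring.
Qed.

Lemma frob_outer_self : frob (outer p m) (outer p m) = vnorm p ^ 2 * fsum (fun j => m j * m j).
Proof.
rewrite vnorm_sqr [RHS]Rmult_comm /frob -fsumZ; apply: fsum_ext => a.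
rewrite Rmult_comm -fsumZ; apply: fsum_ext => j; rewrite /outer; ring.
Qed.

Lemma frob_radial_proj :
  frob P (radial_proj p P) = frob (radial_proj p P) (radial_proj p P).
Proof.
rewrite /radial_proj frobZl !frobZr frob_outer_vmulmx frob_outer_self.
by field; lra.
Qed.

Lemma frob_radial_proj_le :
  0 <= frob P (radial_proj p P) <= frob P P.
Proof.
rewrite frob_radial_proj; split; first exact: frob_self_ge0.
have := frob_self_ge0 (msub P (radial_proj p P)).
rewrite frobBl !frobBr (frobC _ P) -frob_radial_proj; lra.
Qed.

End RadialStretch.

Lemma stretch_cosine_bound (b T x : R) :
  0 < b -> 0 <= x <= T ->
  sqrt (1 - ((b - 1) / (b + 1)) ^ 2) * sqrt T * sqrt (T + (b ^ 2 - 1) * x)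
  <= T + (b - 1) * x.
Proof.
move=> b_gt0 x_bnd.
set al := 1 - ((b - 1) / (b + 1)) ^ 2.
have al_eq : al = 4 * b / (b + 1) ^ 2 by rewrite /al; field; lra.
have al_ge0 : 0 <= al.
  by rewrite al_eq; apply: Rmult_le_pos; [lra | apply/Rlt_le/Rinv_0_lt_compat; nra].
rewrite -sqrt_mult_alt // -sqrt_mult_alt; last nra.
rewrite -[X in _ <= X]sqrt_square; last nra.
apply: sqrt_le_1_alt.
have gap : (T + (b - 1) * x) * (T + (b - 1) * x) - al * T * (T + (b ^ 2 - 1) * x)
           = ((b - 1) * (b * x - (T - x))) ^ 2 / (b + 1) ^ 2.
  by rewrite al_eq; field; lra.
have : 0 <= ((b - 1) * (b * x - (T - x))) ^ 2 / (b + 1) ^ 2.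
  by apply: Rmult_le_pos; [exact: pow2_ge_0 | apply/Rlt_le/Rinv_0_lt_compat; nra].
lra.
Qed.

Lemma radial_stretch_cone {N n : nat} {b : R} {p : vec N} (P : mat N n) :
  0 < b -> 0 < vnorm p ->
  let Q := radial_stretch b p P in
  sqrt (1 - ((b - 1) / (b + 1)) ^ 2) * mnorm P * mnorm Q <= frob P Q.
Proof.
move=> b_gt0 p_gt0 Q.
have x_bnd := frob_radial_proj_le p P p_gt0.
have PQ : frob P Q = frob P P + (b - 1) * frob P (radial_proj p P).
  by rewrite /Q /radial_stretch frobDr frobZr.
have QQ : frob Q Q = frob P P + (b ^ 2 - 1) * frob P (radial_proj p P).
  have := frob_radial_proj p P p_gt0; rewrite /Q /radial_stretch.
  move: (radial_proj p P) => Rp PRp.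
  by rewrite frobDl !frobDr !frobZl !frobZr (frobC Rp P) -PRp; ring.
by rewrite PQ /mnorm QQ; apply: stretch_cosine_bound.
Qed.

Lemma frob_lower_bound_perturb {N n : nat} {P Q V : mat N n} {a e : R} :
  a * mnorm P * mnorm Q <= frob P Q -> mnorm (msub V P) <= e * mnorm P ->
  (a - e) * mnorm P * mnorm Q <= frob V Q.
Proof.
move=> PQ_ge VP_le.
have -> : frob V Q = frob P Q + frob (msub V P) Q by rewrite frobBl; ring.
have cs := Rle_abs (- frob (msub V P) Q); rewrite Rabs_Ropp in cs.
have := frob_cauchy_schwarz (msub V P) Q.
have := Rmult_le_compat_r _ _ _ (mnorm_ge0 Q) VP_le.
lra.
Qed.

Lemma mnorm_relaxation_le {N n : nat} {V P : mat N n} {lam Lam : R} :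
  0 < lam <= Lam -> frob V P >= lam * mnorm P ^ 2 -> mnorm V <= Lam * mnorm P ->
  mnorm (msub (mscale (lam / Lam ^ 2) V) P) <= sqrt (1 - (lam / Lam) ^ 2) * mnorm P.
Proof.
move=> [lam_gt0 lam_le] VP_ge V_le.
have nu_le1 : (lam / Lam) ^ 2 <= 1.
  have nu_Lam : (lam / Lam) ^ 2 * Lam ^ 2 = lam ^ 2 by field; lra.
  have Lam2_gt0 : 0 < Lam ^ 2 by nra.
  have : lam ^ 2 <= Lam ^ 2 by nra.
  nra.
set ka := lam / Lam ^ 2.
have ka_ge0 : 0 <= ka by apply: Rmult_le_pos; [lra | apply/Rlt_le/Rinv_0_lt_compat; nra].
have VV_le : frob V V <= Lam ^ 2 * frob P P.
  by rewrite -!mnorm_sqr; have := mnorm_ge0 V; nra.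
rewrite mnorm_sqr in VP_ge.
rewrite /mnorm -sqrt_mult_alt; last lra.
apply: sqrt_le_1_alt.
rewrite frobBl !frobBr !frobZl !frobZr (frobC P V).
have -> : (1 - (lam / Lam) ^ 2) * frob P P
          = ka * (ka * (Lam ^ 2 * frob P P)) - 2 * ka * (lam * frob P P) + frob P P.
  by rewrite /ka; field; lra.
have := Rmult_le_compat_l _ _ _ (Rmult_le_pos _ _ ka_ge0 ka_ge0) VV_le.
have := Rmult_le_compat_l _ _ _ ka_ge0 (Rge_le _ _ VP_ge).
lra.
Qed.

Section Differentiation.
Context {N : nat}.
Variables (g : R -> vec N) (g' : vec N) (t0 : R).
Hypothesis dg : forall c, derivable_pt_lim (fun t => g t c) t0 (g' c).

Lemma vnorm_sqr_derive :
  derivable_pt_lim (fun t => fsum (fun c => g t c * g t c)) t0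
    (2 * fsum (fun c => g t0 c * g' c)).
Proof.
have -> : 2 * fsum (fun c => g t0 c * g' c)
          = fsum (fun c => g' c * g t0 c + g t0 c * g' c).
  by rewrite -fsumZ; apply: fsum_ext => c; ring.
apply: fsum_derive => c.
exact: (derivable_pt_lim_mult (fun t => g t c) (fun t => g t c) _ _ _ (dg c) (dg c)).
Qed.

Hypothesis g_gt0 : 0 < vnorm (g t0).

Lemma vnorm_derive :
  derivable_pt_lim (fun t => vnorm (g t)) t0
    (fsum (fun c => g t0 c * g' c) / vnorm (g t0)).
Proof.
have sq_gt0 : 0 < fsum (fun c => g t0 c * g t0 c).
  by apply: (sqrt_lt_0_alt 0); rewrite sqrt_0.
have := derivable_pt_lim_comp _ sqrt _ _ _ vnorm_sqr_derive (derivable_pt_lim_sqrt _ sq_gt0).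
by have -> : / (2 * vnorm (g t0)) * (2 * fsum (fun c => g t0 c * g' c))
             = fsum (fun c => g t0 c * g' c) / vnorm (g t0) by field; lra.
Qed.

Lemma Kmap_derive (k k' : R -> R) (a : 'I_N) :
  let r := vnorm (g t0) in
  0 < k r -> derivable_pt_lim k r (k' r) ->
  derivable_pt_lim (fun t => Kmap k (g t) a) t0
    (k r / r * (g' a + (bfun k k' r - 1) *
                       (/ r ^ 2 * (g t0 a * fsum (fun c => g t0 c * g' c))))).
Proof.
move=> r kr_gt0 dk.
have dkr := derivable_pt_lim_comp _ _ _ _ _ vnorm_derive dk.
have dq := derivable_pt_lim_div _ _ _ _ _ dkr vnorm_derive (Rgt_not_eq _ _ g_gt0).
have dKa := derivable_pt_lim_mult _ _ _ _ _ dq (dg a).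
apply: (eq_ind _ (derivable_pt_lim _ t0) dKa).
by rewrite /bfun /comp /div_fct /Rsqr -/r; field; split; apply: Rgt_not_eq.
Qed.

End Differentiation.

Lemma shift0 {n : nat} (x : vec n) (j : 'I_n) : shift x j 0 = x.
Proof. by apply: functional_extensionality => i; rewrite /shift; case: (i == j); ring. Qed.

Lemma is_jacobian_unique {N n : nat} (F : vec n -> vec N) (x : vec n) (J1 J2 : mat N n) :
  is_jacobian F x J1 -> is_jacobian F x J2 -> forall a j, J1 a j = J2 a j.
Proof. by move=> dF1 dF2 a j; apply: uniqueness_limite (dF1 a j) (dF2 a j). Qed.

Lemma is_jacobian_Kmap {N n : nat} {k k' : R -> R} {F : vec n -> vec N} {x : vec n}
    {DF : mat N n} :
  let r := vnorm (F x) in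
  is_jacobian F x DF -> 0 < r -> 0 < k r -> derivable_pt_lim k r (k' r) ->
  is_jacobian (fun y => Kmap k (F y)) x
    (mscale (k r / r) (radial_stretch (bfun k k' r) (F x) DF)).
Proof.
move=> r dF r_gt0 kr_gt0 dk a j.
have := @Kmap_derive _ (fun t => F (shift x j t)) (fun c => DF c j) 0 (fun c => dF c j).
by rewrite shift0; apply.
Qed.

Theorem lemma6p3 (N n : nat) (k k' : R -> R) (O : vec n -> Prop)
  (X : vec n -> vec N) (A : mat N N) (lam Lam : R) :
  (forall t, 0 < t -> 0 < k t) ->
  (forall t, 0 < t -> derivable_pt_lim k t (k' t)) ->
  (forall t, 0 < t -> continuity_pt k' t) ->
  is_open O ->
  (forall x, O x -> X x <> @vzero N) ->
  C1_on O X ->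
  0 < lam -> lam <= Lam ->
  (forall chi : mat N n, frob (mulA A chi) chi >= lam * (mnorm chi) ^ 2) ->
  (forall chi : mat N n, mnorm (mulA A chi) <= Lam * mnorm chi) ->
  forall (x : vec n) (DX DKX : mat N n),
    O x ->
    is_jacobian X x DX ->
    is_jacobian (fun y => Kmap k (X y)) x DKX ->
    0 < bfun k k' (vnorm (X x)) ->
    frob (mscale (lam / Lam ^ 2) (mulA A DX)) DKX >=
      (sqrt (1 - ((bfun k k' (vnorm (X x)) - 1) / (bfun k k' (vnorm (X x)) + 1)) ^ 2)
       - sqrt (1 - (lam / Lam) ^ 2)) * mnorm DX * mnorm DKX.
Proof.
move=> k_gt0 dk _ _ _ _ lam_gt0 lam_le A_coercive A_bounded x DX DKX _ dX dKX b_gt0.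
set r := vnorm (X x) in b_gt0 *; set b := bfun k k' r in b_gt0 *.
have r_gt0 : 0 < r.
  case: (Rle_lt_or_eq_dec 0 r (sqrt_pos _)) => // r0.
  by move: b_gt0; rewrite /b /bfun -r0 Rmult_0_r /Rdiv Rmult_0_l; lra.
set c := k r / r; set Q := radial_stretch b (X x) DX.
have c_ge0 : 0 <= c by apply/Rlt_le/Rdiv_lt_0_compat; auto.
have DKX_eq : forall a j, DKX a j = mscale c Q a j.
  exact: is_jacobian_unique dKX (is_jacobian_Kmap dX r_gt0 (k_gt0 _ r_gt0) (dk _ r_gt0)).
have key := frob_lower_bound_perturb (radial_stretch_cone DX b_gt0 r_gt0)
  (mnorm_relaxation_le (conj lam_gt0 lam_le) (A_coercive DX) (A_bounded DX)).
have -> : mnorm DKX = c * mnorm Q.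
  by rewrite -mnormZ // /mnorm (frob_ext DKX_eq DKX_eq).
rewrite (frob_ext (fun _ _ => erefl) DKX_eq) frobZr.
by apply: Rle_ge; have := Rmult_le_compat_l _ _ _ c_ge0 key; rewrite -/Q; lra.
Qed.
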